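(* For every integer $k \geq 1$, let $\mathcal{c}(k)$ denote the greatest common divisor of all the sums $\sum_{i=1}^{k} c_{n+i}$, $n \geq 0$. Then $$\mathcal{c}(k) = \begin{cases} 4P_{k}, & \text{if } k \text{ is even};\\ Q_{k}, & \text{if } k \text{ is odd}.\end{cases}$$
   Context: The Pell sequence $(P_n)_{n\ge0}$ is defined by $P_0=0$, $P_1=1$, $P_n = 2P_{n-1}+P_{n-2}$. The associated Pell sequence $(Q_n)_{n\ge0}$ is defined by $Q_0=1$, $Q_1=1$, $Q_n=2Q_{n-1}+Q_{n-2}$. The Lucas-cobalancing sequence $(c_n)_{n\ge0}$ is defined by $c_0=-1$, $c_1=1$, $c_n=6c_{n-1}-c_{n-2}$. *)

From mathcomp Require Import all_boot all_order all_algebra.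
Set Implicit Arguments. Unset Strict Implicit. Unset Printing Implicit Defensive.
Import Order.TTheory GRing.Theory Num.Theory.
Local Open Scope ring_scope.

Fixpoint pell (n : nat) : int :=
  match n with
  | 0%N => 0
  | 1%N => 1
  | (m.+1 as n1).+1 => 2 * pell n1 + pell m
  end.

Fixpoint qpell (n : nat) : int :=
  match n with
  | 0%N => 1
  | 1%N => 1
  | (m.+1 as n1).+1 => 2 * qpell n1 + qpell m
  end.

Fixpoint lcob (n : nat) : int :=
  match n with
  | 0%N => -1
  | 1%N => 1
  | (m.+1 as n1).+1 => 6 * lcob n1 - lcob m
  end.

Definition is_gcd_of_seq (f : nat -> int) (g : int) : Prop :=
  0 <= g /\ (forall n, (g %| f n)%Z) /\
  (forall d : int, (forall n, (d %| f n)%Z) -> (d %| g)%Z).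

Definition lcob_window (k n : nat) : int := \sum_(1 <= i < k.+1) lcob (n + i).

From mathcomp Require Import all_boot all_order all_algebra.
From mathcomp Require Import ring zify.
Import Order.TTheory GRing.Theory Num.Theory.
Local Open Scope ring_scope.

(* Since c_(j+1) = Q_(2j+1), twice a window telescopes to Q_(2(n+k)) - Q_(2n),
   and the addition formulas for (P, Q) factor this difference as
   Q_k Q_(2n+k) (k odd) or 4 P_k P_(n+k/2) Q_(n+k/2) (k even).  The gcd of all
   windows is then the common factor, because the cofactors at n = 0 and n = 1
   are coprime: this follows from Q_j^2 - 2 P_j^2 = (-1)^j. *)

Lemma pellSS j : pell j.+2 = 2 * pell j.+1 + pell j. Proof. by []. Qed.
Lemma qpellSS j : qpell j.+2 = 2 * qpell j.+1 + qpell j. Proof. by []. Qed.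
Lemma lcobSS j : lcob j.+2 = 6 * lcob j.+1 - lcob j. Proof. by []. Qed.

Lemma pellS_qpellS j :
  pell j.+1 = pell j + qpell j /\ qpell j.+1 = qpell j + 2 * pell j.
Proof.
elim: j => [|j [IHp IHq]]; first by split.
by rewrite pellSS qpellSS IHp IHq; split; ring.
Qed.

Lemma pellS j : pell j.+1 = pell j + qpell j.
Proof. by case: (pellS_qpellS j). Qed.

Lemma qpellS j : qpell j.+1 = qpell j + 2 * pell j.
Proof. by case: (pellS_qpellS j). Qed.

Lemma pell_qpell_ge0 j : 0 <= pell j /\ 0 <= qpell j.
Proof.
elim: j => [|j [Hp Hq]] //; rewrite pellS qpellS; split; lia.
Qed.

Lemma qpell_sqr_sub j : qpell j ^+ 2 - 2 * pell j ^+ 2 = (-1) ^+ j.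
Proof.
by elim: j => [|j IHj] //; rewrite pellS qpellS [in RHS]exprS -IHj; ring.
Qed.

Lemma pellD_qpellD a b :
  pell (a + b) = pell a * qpell b + qpell a * pell b /\
  qpell (a + b) = qpell a * qpell b + 2 * pell a * pell b.
Proof.
elim: b => [|b [IHp IHq]]; first by rewrite addn0; split; ring.
by rewrite addnS !pellS !qpellS IHp IHq; split; ring.
Qed.

Lemma pell_double j : pell j.*2 = 2 * pell j * qpell j.
Proof. by rewrite -addnn; case: (pellD_qpellD j j) => -> _; ring. Qed.

Lemma lcobS j : lcob j.+1 = qpell j.*2.+1.
Proof.
suff: lcob j.+1 = qpell j.*2.+1 /\ lcob j.+2 = qpell j.*2.+3 by case.
elim: j => [|j [IH1 IH2]] //; split=> //.
rewrite lcobSS IH1 IH2 doubleS.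
by rewrite (qpellSS j.*2.+3) (qpellSS j.*2.+2) (qpellSS j.*2.+1); ring.
Qed.

Lemma lcob_window_telescope k n :
  2 * lcob_window k n = qpell (n + k).*2 - qpell n.*2.
Proof.
rewrite /lcob_window big_add1 /= mulr_sumr.
rewrite (telescope_sumr_eq (fun i => qpell (n + i).*2)) ?addn0 // => i _.
by rewrite addnS lcobS doubleS qpellSS qpellS; ring.
Qed.

Lemma qpell_add_double a k :
  qpell (a + k + k) = 2 * qpell k * qpell (a + k) - (-1) ^+ k * qpell a /\
  qpell (a + k + k) = 4 * pell k * pell (a + k) + (-1) ^+ k * qpell a.
Proof.
have [Pak Qak] := pellD_qpellD (a + k) k.
have [Pa Qa] := pellD_qpellD a k.
by rewrite Qak Pa Qa -qpell_sqr_sub; split; ring.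
Qed.

Lemma lcob_window_odd k n :
  odd k -> lcob_window k n = qpell k * qpell (n.*2 + k).
Proof.
move=> k_odd; apply: (mulfI (_ : 2 != 0)) => //.
rewrite lcob_window_telescope (_ : (n + k).*2 = n.*2 + k + k)%N; last lia.
have [-> _] := qpell_add_double n.*2 k.
by rewrite -signr_odd k_odd; ring.
Qed.

Lemma lcob_window_even m n :
  lcob_window m.*2 n = 4 * pell m.*2 * (pell (n + m) * qpell (n + m)).
Proof.
apply: (mulfI (_ : 2 != 0)) => //.
rewrite lcob_window_telescope (_ : (n + m.*2).*2 = n.*2 + m.*2 + m.*2)%N; last lia.
have [_ ->] := qpell_add_double n.*2 m.*2.
rewrite -signr_odd odd_double (_ : n.*2 + m.*2 = (n + m).*2)%N; last lia.
by rewrite (pell_double (n + m)); ring.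
Qed.

Lemma coprimez_qpell_2pell j : coprimez (qpell j) (2 * pell j).
Proof.
apply/coprimezP; exists ((-1) ^+ j * qpell j, - (-1) ^+ j * pell j) => /=.
transitivity ((-1) ^+ j * (qpell j ^+ 2 - 2 * pell j ^+ 2)); first by ring.
by rewrite qpell_sqr_sub -expr2 sqrr_sign.
Qed.

Lemma coprimez_qpell_pell j : coprimez (qpell j) (pell j).
Proof. by have := coprimez_qpell_2pell j; rewrite coprimezMr => /andP[]. Qed.

Lemma coprimez_qpell_2 j : coprimez (qpell j) 2.
Proof. by have := coprimez_qpell_2pell j; rewrite coprimezMr => /andP[]. Qed.

Lemma coprimez_qpell_qpellS j : coprimez (qpell j) (qpell j.+1).
Proof. by rewrite /coprimez qpellS gcdzDl; apply: coprimez_qpell_2pell. Qed.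

Lemma coprimez_qpell_pellS j : coprimez (qpell j) (pell j.+1).
Proof. by rewrite /coprimez pellS gcdzDr; apply: coprimez_qpell_pell. Qed.

Lemma coprimez_pell_qpellS j : coprimez (pell j) (qpell j.+1).
Proof.
rewrite /coprimez qpellS addrC gcdzMDl -/(coprimez _ _).
by rewrite coprimez_sym coprimez_qpell_pell.
Qed.

Lemma coprimez_pell_pellS j : coprimez (pell j) (pell j.+1).
Proof.
rewrite /coprimez pellS gcdzDl -/(coprimez _ _).
by rewrite coprimez_sym coprimez_qpell_pell.
Qed.

Lemma coprimez_qpell_qpellSS j : coprimez (qpell j) (qpell j.+2).
Proof.
rewrite /coprimez qpellSS gcdzDr -/(coprimez _ _).
by rewrite coprimezMr coprimez_qpell_2 coprimez_qpell_qpellS.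
Qed.

Lemma coprimez_pellMqpell_succ j :
  coprimez (pell j * qpell j) (pell j.+1 * qpell j.+1).
Proof.
rewrite coprimezMl !coprimezMr coprimez_pell_pellS coprimez_pell_qpellS.
by rewrite coprimez_qpell_pellS coprimez_qpell_qpellS.
Qed.

Lemma is_gcd_of_seq_mul (f h : nat -> int) (g : int) (a b : nat) :
  0 <= g -> (forall n, f n = g * h n) -> coprimez (h a) (h b) ->
  is_gcd_of_seq f g.
Proof.
move=> g_ge0 fE co_hab; split=> //.
split=> [n | d d_f]; first by rewrite fE dvdz_mulr.
have := d_f a; have := d_f b; rewrite !fE => d_gb d_ga.
have : (d %| gcdz (g * h a) (g * h b))%Z by rewrite dvdz_gcd d_ga d_gb.
by rewrite -mulz_gcdr (eqP co_hab) mulr1 gez0_abs.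
Qed.

Theorem theorem19 (k : nat) : (1 <= k)%N ->
  is_gcd_of_seq (lcob_window k) (if odd k then qpell k else 4 * pell k).
Proof.
move=> _; case: ifP => k_odd.
- apply: (@is_gcd_of_seq_mul _ (fun n => qpell (n.*2 + k)) _ 0 1).
  + by case: (pell_qpell_ge0 k).
  + by move=> n; rewrite lcob_window_odd.
  + exact: coprimez_qpell_qpellSS.
- set m := k./2; have -> : k = m.*2 by rewrite -[LHS]odd_double_half k_odd.
  apply: (@is_gcd_of_seq_mul _ (fun n => pell (n + m) * qpell (n + m)) _ 0 1).
  + by case: (pell_qpell_ge0 m.*2) => P_ge0 _; lia.
  + by move=> n; rewrite lcob_window_even.
  + exact: coprimez_pellMqpell_succ.
Qed.
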